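(* Let $\mathfrak{G}$ be a finite alphabet, and $\mathfrak{s}$ and $\mathfrak{t}$ be two $\mathfrak{G}$-trees such that $\mathfrak{s}\preceq\mathfrak{t}$. As subposets of the $\mathfrak{G}$-prefix poset (resp. of the $(\mathfrak{G}\sqcup\{\lozenge_{|\mathfrak{s}|}\})$-prefix poset for the last one), one has the poset isomorphisms $[\mathfrak{s},\mathfrak{t}] \simeq [\text{leaf},\mathfrak{r}_1]\times\cdots\times[\text{leaf},\mathfrak{r}_{|\mathfrak{s}|}] \simeq [\lozenge_{|\mathfrak{s}|},\ \lozenge_{|\mathfrak{s}|}[\mathfrak{r}_1,\dots,\mathfrak{r}_{|\mathfrak{s}|}]]$, where $(\mathfrak{r}_1,\dots,\mathfrak{r}_{|\mathfrak{s}|})$ is the forest $\mathfrak{t}\setminus\mathfrak{s}$ and ''leaf'' denotes the tree with no internal node.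
   Context: $\mathfrak{G}$ is a finite alphabet (letters with arities $\geq 1$). A $\mathfrak{G}$-tree is either the leaf (the tree with no internal node) or a root decorated by a letter $\mathtt{a}\in\mathfrak{G}$ with $|\mathtt{a}|$ children that are $\mathfrak{G}$-trees; $|\mathfrak{s}|$ denotes the number of leaves, ordered left to right, and $\mathfrak{s}\circ[\mathfrak{r}_1,\dots,\mathfrak{r}_{|\mathfrak{s}|}]$ grafts each $\mathfrak{r}_i$ onto the $i$-th leaf of $\mathfrak{s}$. The $\mathfrak{G}$-prefix poset is the set of $\mathfrak{G}$-trees ordered by $\mathfrak{s}\preceq\mathfrak{t}$ iff $\mathfrak{t}=\mathfrak{s}\circ[\mathfrak{r}_1,\dots,\mathfrak{r}_{|\mathfrak{s}|}]$ for some $\mathfrak{G}$-trees $\mathfrak{r}_i$; these $\mathfrak{r}_i$ are then unique and form the difference $\mathfrak{t}\setminus\mathfrak{s}$. For a new letter $\lozenge_k$ of arity $k$, $\lozenge_k[\mathfrak{r}_1,\dots,\mathfrak{r}_k]$ is the tree with root decorated by $\lozenge_k$ and children $\mathfrak{r}_1,\dots,\mathfrak{r}_k$, and $\lozenge_k$ alone denotes the corolla (root $\lozenge_k$ with $k$ leaves as children). *)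

From mathcomp Require Import all_boot.
Set Implicit Arguments. Unset Strict Implicit. Unset Printing Implicit Defensive.

(* Planar trees whose internal nodes are decorated by letters of type A.
   Leaf = the tree with no internal node; Node a ts = root decorated by a
   with children ts (left to right). *)
Inductive tree (A : Type) : Type :=
| Leaf : tree A
| Node : A -> seq (tree A) -> tree A.
Arguments Leaf {A}.

Section Trees.
Variable A : Type.

Fixpoint nleaves (t : tree A) : nat :=
  match t with
  | Leaf => 1
  | Node _ ts => sumn (map nleaves ts)
  end.

Fixpoint wf (ar : A -> nat) (t : tree A) : bool :=
  match t with
  | Leaf => true
  | Node a ts => (size ts == ar a) && all (wf ar) ts
  end.

(* grafting s o [r_1,...,r_|s|]: the i-th tree of rs is grafted on the i-th leaf *)
Fixpoint graft (s : tree A) (rs : seq (tree A)) : tree A :=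
  match s with
  | Leaf => nth Leaf rs 0
  | Node a ts =>
      let fix graft_list (ts : seq (tree A)) (rs : seq (tree A)) :=
        match ts with
        | [::] => [::]
        | t :: ts' => graft t (take (nleaves t) rs)
                        :: graft_list ts' (drop (nleaves t) rs)
        end in
      Node a (graft_list ts rs)
  end.

Definition tprefix (ar : A -> nat) (s t : tree A) : Prop :=
  exists rs : seq (tree A),
    [/\ size rs = nleaves s, all (wf ar) rs & t = graft s rs].

Definition tinterval (ar : A -> nat) (s t : tree A) (u : tree A) : Prop :=
  wf ar u /\ tprefix ar s u /\ tprefix ar u t.

End Trees.

Fixpoint tmap (A B : Type) (f : A -> B) (t : tree A) : tree B :=
  match t with
  | Leaf => Leaf
  | Node a ts => Node (f a) (map (tmap f) ts)
  end.

(* the alphabet G extended by a new letter (None) of arity k *)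
Definition ext_ar (G : Type) (ar : G -> nat) (k : nat) (x : option G) : nat :=
  match x with Some a => ar a | None => k end.

Definition corolla (G : Type) (k : nat) : tree (option G) := Node None (nseq k Leaf).
Definition lozenge (G : Type) (rs : seq (tree G)) : tree (option G) :=
  Node None (map (tmap Some) rs).

(* Product poset [leaf, r_1] x ... x [leaf, r_k]: k-tuples (as sequences of
   size k) with componentwise tprefix order. *)
Definition prod_intervals (G : Type) (ar : G -> nat) (rs : seq (tree G))
  (us : seq (tree G)) : Prop :=
  size us = size rs /\
  forall i, i < size rs -> tinterval ar Leaf (nth Leaf rs i) (nth Leaf us i).

Definition prod_le (G : Type) (ar : G -> nat) (k : nat) (us vs : seq (tree G)) : Prop :=
  forall i, i < k -> tprefix ar (nth Leaf us i) (nth Leaf vs i).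

Definition poset_iso (T1 T2 : Type) (P1 : T1 -> Prop) (le1 : T1 -> T1 -> Prop)
  (P2 : T2 -> Prop) (le2 : T2 -> T2 -> Prop) : Prop :=
  exists (f : T1 -> T2) (g : T2 -> T1),
    [/\ (forall x, P1 x -> P2 (f x)),
        (forall y, P2 y -> P1 (g y)),
        (forall x, P1 x -> g (f x) = x),
        (forall y, P2 y -> f (g y) = y) &
        (forall x y, P1 x -> P1 y -> (le1 x y <-> le2 (f x) (f y)))].

From mathcomp Require Import all_boot.
Set Implicit Arguments. Unset Strict Implicit. Unset Printing Implicit Defensive.

(* A tree u lies above s exactly when u = s o [d_1, ..., d_|s|] for the forest
   d = u \ s, and grafting onto the leaves of s is an order embedding of forests
   of length |s| ordered componentwise, since grafts on distinct leaves never
   interact.  Hence [s, s o rs] is the product of the intervals [leaf, r_i].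
   The third poset is the instance s = corolla_k of the first isomorphism,
   because lozenge_k[r_1, ..., r_k] = corolla_k o [r_1, ..., r_k] once the r_i
   are relabelled into the extended alphabet. *)

Section All2.
Variables (S T : Type) (r : S -> T -> bool).

Lemma all2_size xs ys : all2 r xs ys -> size xs = size ys.
Proof. by elim: xs ys => [|x xs IH] [|y ys] //= /andP[_ /IH ->]. Qed.

Lemma all2_cat xs1 xs2 ys1 ys2 : size xs1 = size ys1 ->
  all2 r (xs1 ++ xs2) (ys1 ++ ys2) = all2 r xs1 ys1 && all2 r xs2 ys2.
Proof. by elim: xs1 ys1 => [|x xs IH] [|y ys] //= [/IH ->]; rewrite andbA. Qed.

Lemma all2_nthP x0 y0 xs ys : size xs = size ys ->
  reflect (forall i, i < size xs -> r (nth x0 xs i) (nth y0 ys i)) (all2 r xs ys).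
Proof.
elim: xs ys => [|x xs IH] [|y ys] //=; first by constructor.
move=> [sz]; apply: (iffP andP) => [[rxy /(IH _ sz) rxys] [|i] //= | r_nth]; first exact: rxys.
by split; [exact: (r_nth 0) | apply/(IH _ sz) => i /(r_nth i.+1)].
Qed.

End All2.

Section TreeInd.
Variables (A : Type) (P : tree A -> Prop).

Fixpoint all_P (ts : seq (tree A)) : Prop :=
  if ts is t :: ts' then P t /\ all_P ts' else True.

Hypothesis P_leaf : P Leaf.
Hypothesis P_node : forall a ts, all_P ts -> P (Node a ts).

Fixpoint tree_nest_ind (t : tree A) : P t :=
  match t with
  | Leaf => P_leaf
  | Node a ts => P_node a ((fix forest_ind ts : all_P ts :=
      if ts is t :: ts' then conj (tree_nest_ind t) (forest_ind ts') else I) ts)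
  end.

End TreeInd.

Section Graft.
Variable A : Type.

Fixpoint graft_forest (ts rs : seq (tree A)) : seq (tree A) :=
  if ts is t :: ts' then
    graft t (take (nleaves t) rs) :: graft_forest ts' (drop (nleaves t) rs)
  else [::].

Lemma graft_node a ts rs : graft (Node a ts) rs = Node a (graft_forest ts rs).
Proof. by rewrite /=; congr Node; elim: ts rs => //= t ts IH rs; rewrite IH. Qed.

Lemma graft_forest_leaves rs : graft_forest (nseq (size rs) Leaf) rs = rs.
Proof. by elim: rs => //= r rs IH; rewrite drop0 IH. Qed.

End Graft.

Section Prefix.
Variables (A : eqType) (ar : A -> nat).

Fixpoint prefixb (s u : tree A) {struct s} : bool :=
  match s, u with
  | Leaf, _ => wf ar u
  | Node a ts, Node b us => (a == b) && all2 prefixb ts us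
  | Node _ _, Leaf => false
  end.

(* The forest u \ s, meaningful when prefixb s u. *)
Fixpoint tdiff (s u : tree A) {struct s} : seq (tree A) :=
  match s, u with
  | Leaf, _ => [:: u]
  | Node _ ts, Node _ us =>
      let fix tdiff_forest ts us :=
        match ts, us with
        | t :: ts', v :: us' => tdiff t v ++ tdiff_forest ts' us'
        | _, _ => [::]
        end in
      tdiff_forest ts us
  | Node _ _, Leaf => [::]
  end.

Fixpoint tdiff_forest (ts us : seq (tree A)) : seq (tree A) :=
  match ts, us with
  | t :: ts', v :: us' => tdiff t v ++ tdiff_forest ts' us'
  | _, _ => [::]
  end.

Lemma tdiff_node a ts b us : tdiff (Node a ts) (Node b us) = tdiff_forest ts us.
Proof. by []. Qed.

Lemma size_tdiff s u : prefixb s u -> size (tdiff s u) = nleaves s.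
Proof.
elim/tree_nest_ind: s u => [|a ts IH] [|b us] // /andP[_]; rewrite tdiff_node /=.
elim: ts us IH => [|t ts IHts] [|u us] //= [IHt IHl] /andP[tu tsus].
by rewrite size_cat IHt // IHts.
Qed.

Lemma wf_tdiff s u : prefixb s u -> all (wf ar) (tdiff s u).
Proof.
elim/tree_nest_ind: s u => [|a ts IH] [|b us] //; first by move=> /= ->.
move=> /andP[_]; rewrite tdiff_node.
elim: ts us IH => [|t ts IHts] [|u us] //= [IHt IHl] /andP[tu tsus].
by rewrite all_cat IHt // IHts.
Qed.

Lemma graft_tdiff s u : prefixb s u -> graft s (tdiff s u) = u.
Proof.
elim/tree_nest_ind: s u => [|a ts IH] [|b us] // /andP[/eqP <-].
rewrite tdiff_node graft_node => tsus; congr Node.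
elim: ts us IH tsus => [|t ts IHts] [|u us] //= [IHt IHl] /andP[tu tsus].
by rewrite take_size_cat ?drop_size_cat ?size_tdiff // IHt // IHts.
Qed.

Lemma tdiff_graft s rs : size rs = nleaves s -> tdiff s (graft s rs) = rs.
Proof.
elim/tree_nest_ind: s rs => [|a ts IH] rs; first by case: rs => [|r [|]].
rewrite graft_node tdiff_node /=.
elim: ts rs IH => [|t ts IHts] rs [] //=; first by case: rs.
move=> IHt IHl sz; have le_t : nleaves t <= size rs by rewrite sz leq_addr.
by rewrite IHt ?size_takel // IHts ?cat_take_drop // size_drop sz addKn.
Qed.

Lemma prefixb_graft s rs :
  size rs = nleaves s -> all (wf ar) rs -> prefixb s (graft s rs).
Proof.
elim/tree_nest_ind: s rs => [|a ts IH] rs; first by case: rs => [|r [|]] //= _ /andP[].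
rewrite graft_node /= eqxx /=.
elim: ts rs IH => [|t ts IHts] rs [] //= IHt IHl sz.
have le_t : nleaves t <= size rs by rewrite sz leq_addr.
rewrite -{1}(cat_take_drop (nleaves t) rs) all_cat => /andP[wf_l wf_r].
by rewrite IHt ?size_takel // IHts // size_drop sz addKn.
Qed.

Lemma prefixb_graft2 s us vs : size us = nleaves s -> size vs = nleaves s ->
  prefixb (graft s us) (graft s vs) = all2 prefixb us vs.
Proof.
elim/tree_nest_ind: s us vs => [|a ts IH] us vs.
  by case: us => [|u [|]] //; case: vs => [|v [|]] //= _ _; rewrite andbT.
rewrite !graft_node /= eqxx /=.
elim: ts us vs IH => [|t ts IHts] us vs [] /=; first by case: us; case: vs.
move=> IHt IHl sz_us sz_vs.
have [le_us le_vs] : nleaves t <= size us /\ nleaves t <= size vs.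
  by rewrite sz_us sz_vs leq_addr.
rewrite -[us in RHS](cat_take_drop (nleaves t)) -[vs in RHS](cat_take_drop (nleaves t)).
rewrite all2_cat ?size_takel // IHt ?size_takel // IHts //.
  by rewrite size_drop sz_us addKn.
by rewrite size_drop sz_vs addKn.
Qed.

Lemma tprefixP s u : reflect (tprefix ar s u) (prefixb s u).
Proof.
apply: (iffP idP) => [su | [rs [sz wf_rs ->]]]; last exact: prefixb_graft.
by exists (tdiff s u); rewrite size_tdiff ?wf_tdiff ?graft_tdiff.
Qed.

Lemma prefixb_wf s u : wf ar s -> prefixb s u -> wf ar u.
Proof.
elim/tree_nest_ind: s u => [|a ts IH] [|b us] //= /andP[/eqP sz wf_ts].
move=> /andP[/eqP <- tsus]; rewrite -(all2_size tsus) sz eqxx /=.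
elim: ts us IH tsus wf_ts {sz} => [|t ts IHts] [|u us] //= [IHt IHl].
by move=> /andP[tu tsus] /andP[wf_t wf_ts]; rewrite (IHt _ wf_t tu) IHts.
Qed.

Lemma tintervalP s t u :
  wf ar s -> tinterval ar s t u <-> prefixb s u && prefixb u t.
Proof.
move=> wf_s; split => [[_ [/tprefixP -> /tprefixP]] // | /andP[su ut]].
by split; [exact: prefixb_wf su | split; apply/tprefixP].
Qed.

Lemma prod_intervalsP rs us :
  prod_intervals ar rs us <-> all (wf ar) us && all2 prefixb us rs.
Proof.
have leafP r u : tinterval ar Leaf r u <-> wf ar u && prefixb u r.
  exact: tintervalP.
split => [[sz in_rs] | /andP[wf_us le_us]].
  have {}in_rs i : i < size us ->
      wf ar (nth Leaf us i) && prefixb (nth Leaf us i) (nth Leaf rs i).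
    by rewrite sz => /in_rs /leafP.
  apply/andP; split; first by apply/(all_nthP Leaf) => i /in_rs /andP[].
  by apply/(all2_nthP _ Leaf Leaf sz) => i /in_rs /andP[].
have sz := all2_size le_us; split => // i lt_i; apply/leafP.
rewrite (all_nthP Leaf wf_us) ?sz //=.
by apply: (elimT (all2_nthP _ Leaf Leaf sz)) le_us _ _; rewrite sz.
Qed.

Lemma prod_leP k us vs : size us = k -> size vs = k ->
  reflect (prod_le ar k us vs) (all2 prefixb us vs).
Proof.
move=> <- /esym sz.
by apply: (iffP (all2_nthP _ Leaf Leaf sz)) => le_us i /le_us /tprefixP.
Qed.

Lemma interval_prod_iso s rs :
  wf ar s -> size rs = nleaves s ->
  poset_iso (tinterval ar s (graft s rs)) (tprefix ar)
            (prod_intervals ar rs) (prod_le ar (nleaves s)).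
Proof.
move=> wf_s sz_rs; exists (tdiff s), (graft s); split.
- move=> u /(tintervalP _ _ wf_s) /andP[su ut]; apply/prod_intervalsP.
  by rewrite wf_tdiff // -(prefixb_graft2 (s := s)) ?size_tdiff ?graft_tdiff.
- move=> us /prod_intervalsP /andP[wf_us le_us].
  have sz_us : size us = nleaves s by rewrite (all2_size le_us).
  by apply/(tintervalP _ _ wf_s); rewrite prefixb_graft // prefixb_graft2.
- by move=> u /(tintervalP _ _ wf_s) /andP[/graft_tdiff].
- by move=> us /prod_intervalsP /andP[_ /all2_size sz]; rewrite tdiff_graft // sz.
move=> u v /(tintervalP _ _ wf_s) /andP[su _] /(tintervalP _ _ wf_s) /andP[sv _].
have uvE : prefixb u v = all2 prefixb (tdiff s u) (tdiff s v).
  by rewrite -(prefixb_graft2 (s := s)) ?size_tdiff ?graft_tdiff.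
apply: iff_trans (rwP (tprefixP u v)) _; rewrite uvE.
exact: iff_sym (rwP (prod_leP (size_tdiff su) (size_tdiff sv))).
Qed.

End Prefix.

Section PosetIso.
Variables (T1 T2 T3 : Type).
Variables (P1 : T1 -> Prop) (P2 : T2 -> Prop) (P3 : T3 -> Prop).
Variables (le1 : T1 -> T1 -> Prop) (le2 : T2 -> T2 -> Prop) (le3 : T3 -> T3 -> Prop).

Lemma poset_iso_sym : poset_iso P1 le1 P2 le2 -> poset_iso P2 le2 P1 le1.
Proof.
case=> f [g [fP gP gK fK le_f]]; exists g, f; split => // x y Px Py.
have := le_f _ _ (gP _ Px) (gP _ Py); rewrite (fK _ Px) (fK _ Py).
exact: iff_sym.
Qed.

Lemma poset_iso_trans :
  poset_iso P1 le1 P2 le2 -> poset_iso P2 le2 P3 le3 -> poset_iso P1 le1 P3 le3.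
Proof.
case=> f [g [fP gP gK fK le_f]] [f' [g' [fP' gP' gK' fK' le_f']]].
exists (f' \o f), (g \o g'); split => [x Px | y Py | x Px | y Py | x y Px Py] /=.
- exact/fP'/fP.
- exact/gP/gP'.
- by rewrite (gK' _ (fP _ Px)) gK.
- by rewrite (fK _ (gP' _ Py)) fK'.
exact: iff_trans (le_f _ _ Px Py) (le_f' _ _ (fP _ Px) (fP _ Py)).
Qed.

End PosetIso.

Section Relabel.
Variables (G : eqType) (ar : G -> nat) (k : nat).
Local Notation ar' := (ext_ar ar k).

Lemma wf_tmap x : wf ar' (tmap Some x) = wf ar x.
Proof.
elim/tree_nest_ind: x => [|a ts IH] //=; rewrite size_map all_map.
by congr (_ && _); elim: ts IH => //= t ts IHts [-> /IHts ->].
Qed.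

Lemma all_wf_tmap xs : all (wf ar') (map (tmap Some) xs) = all (wf ar) xs.
Proof. by rewrite all_map; apply: eq_all => x; exact: wf_tmap. Qed.

Lemma prefixb_tmap x y : prefixb ar' (tmap Some x) (tmap Some y) = prefixb ar x y.
Proof.
elim/tree_nest_ind: x y => [|a ts IH] [|b us] //=; first exact: (wf_tmap (Node b us)).
rewrite (inj_eq (@Some_inj _)); congr (_ && _).
by elim: ts us IH => [|t ts IHts] [|u us] //= [-> /IHts ->].
Qed.

Lemma all2_prefixb_tmap xs ys :
  all2 (prefixb ar') (map (tmap Some) xs) (map (tmap Some) ys) = all2 (prefixb ar) xs ys.
Proof. by elim: xs ys => [|x xs IH] [|y ys] //=; rewrite prefixb_tmap IH. Qed.

Fixpoint untmap (t : tree (option G)) : tree G :=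
  match t with
  | Node (Some a) ts => Node a (map untmap ts)
  | _ => Leaf
  end.

Lemma tmapK : cancel (tmap Some) untmap.
Proof.
elim/tree_nest_ind => [|a ts IH] //=; rewrite -map_comp; congr Node.
by elim: ts IH => //= t ts IHts [-> /IHts ->].
Qed.

Lemma untmapK_prefixb v r : prefixb ar' v (tmap Some r) -> tmap Some (untmap v) = v.
Proof.
elim/tree_nest_ind: v r => [|o vs IH] [|a rs] // /andP[/eqP -> vsrs] /=.
rewrite -map_comp; congr Node.
by elim: vs rs IH vsrs => [|v vs IHvs] [|r rs] //= [IHv IHl] /andP[/IHv -> /IHvs ->].
Qed.

Lemma map_untmapK_prefixb vs rs :
  all2 (prefixb ar') vs (map (tmap Some) rs) -> map (tmap Some) (map untmap vs) = vs.
Proof.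
by elim: vs rs => [|v vs IH] [|r rs] //= /andP[/untmapK_prefixb -> /IH ->].
Qed.

Lemma prod_intervals_tmap_iso rs : size rs = k ->
  poset_iso (prod_intervals ar rs) (prod_le ar k)
            (prod_intervals ar' (map (tmap Some) rs)) (prod_le ar' k).
Proof.
move=> sz_rs; exists (map (tmap Some)), (map untmap); split.
- move=> us /prod_intervalsP /andP[wf_us le_us]; apply/prod_intervalsP.
  by rewrite all_wf_tmap all2_prefixb_tmap wf_us.
- move=> vs /prod_intervalsP /andP[wf_vs le_vs]; apply/prod_intervalsP.
  have vsE := map_untmapK_prefixb le_vs.
  by rewrite -all_wf_tmap -all2_prefixb_tmap vsE wf_vs.
- by move=> us _; rewrite -map_comp (eq_map tmapK) map_id.
- by move=> vs /prod_intervalsP /andP[_ /map_untmapK_prefixb].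
move=> us vs /prod_intervalsP /andP[_ le_us] /prod_intervalsP /andP[_ le_vs].
have sz_us : size us = k by rewrite (all2_size le_us).
have sz_vs : size vs = k by rewrite (all2_size le_vs).
apply: iff_trans (rwP (prod_leP _ sz_us sz_vs)) _; rewrite -all2_prefixb_tmap.
by apply: iff_sym; apply: rwP; apply: prod_leP; rewrite size_map.
Qed.

Lemma nleaves_corolla : nleaves (corolla G k) = k.
Proof. by rewrite /= map_nseq sumn_nseq mul1n. Qed.

Lemma wf_corolla : wf ar' (corolla G k).
Proof. by rewrite /= size_nseq eqxx all_nseq orbT. Qed.

Lemma graft_corolla xs : size xs = k -> graft (corolla G k) xs = Node None xs.
Proof. by move=> <-; rewrite graft_node graft_forest_leaves. Qed.

Lemma prod_lozenge_iso rs : size rs = k ->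
  poset_iso (prod_intervals ar rs) (prod_le ar k)
            (tinterval ar' (corolla G k) (lozenge rs)) (tprefix ar').
Proof.
move=> sz_rs; apply: poset_iso_trans (prod_intervals_tmap_iso sz_rs) _.
have := interval_prod_iso (rs := map (tmap Some) rs) wf_corolla.
rewrite nleaves_corolla size_map sz_rs graft_corolla ?size_map //.
by move=> /(_ erefl) /poset_iso_sym.
Qed.

End Relabel.

Theorem proposition3p7 (G : finType) (ar : G -> nat)
  (ar_pos : forall a : G, 0 < ar a)
  (s t : tree G) (s_wf : wf ar s) (t_wf : wf ar t)
  (st : tprefix ar s t)
  (rs : seq (tree G))
  (rs_size : size rs = nleaves s) (rs_wf : all (wf ar) rs)
  (t_eq : t = graft s rs) :
  poset_iso (tinterval ar s t) (tprefix ar)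
            (prod_intervals ar rs) (prod_le ar (nleaves s))
  /\
  poset_iso (prod_intervals ar rs) (prod_le ar (nleaves s))
            (tinterval (ext_ar ar (nleaves s)) (corolla G (nleaves s)) (lozenge rs))
            (tprefix (ext_ar ar (nleaves s))).
Proof.
split; first by rewrite t_eq; exact: interval_prod_iso.
exact: prod_lozenge_iso.
Qed.
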